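(* For any $n$-qubit pure state $\ket{\psi}$ and any integer $k\ge1$, the $nk$-qubit state $\ket{\psi}^{\otimes k}$ satisfies $\mathcal{C}(\ket{\psi}^{\otimes k})=1-\big(1-\mathcal{C}(\ket{\psi})\big)^k$.
   Context: For an $m$-qubit pure state $\ket{\phi}$, $\mathcal{C}(\ket{\phi})=1-\frac{1}{2^{m}}\sum_{\alpha}\mathrm{Tr}[\rho_\alpha^2]$, the sum over all subsets $\alpha$ of its $m$ qubits, $\rho_\alpha$ the reduced state on $\alpha$, $\mathrm{Tr}[\rho_\emptyset^2]=1$. *)

(* Complex amplitudes live in an arbitrary numClosedFieldType C
   (e.g. complex numbers); conjugation is z^*. *)
From HB Require Import structures.
From mathcomp Require Import all_boot all_order all_algebra.
Set Implicit Arguments. Unset Strict Implicit. Unset Printing Implicit Defensive.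
Import Order.TTheory GRing.Theory Num.Theory.
Local Open Scope ring_scope.

(* computational basis states of n qubits: bit strings x : 'I_n -> bool *)
Definition cfg (n : nat) := {ffun 'I_n -> bool}.

Definition merge n (A : {set 'I_n}) (x z : cfg n) : cfg n :=
  [ffun i => if i \in A then x i else z i].

(* x is supported in A (all bits outside A are 0): encodes basis states of the
   subsystem A as n-bit strings padded with zeros *)
Definition onA n (A : {set 'I_n}) (x : cfg n) : bool :=
  [forall i, (i \notin A) ==> ~~ x i].

(* matrix entries <x| rho_A |y> of the reduced state of |psi><psi| on A
   (partial trace over the complement of A) *)
Definition rdm (C : numClosedFieldType) n (psi : cfg n -> C) (A : {set 'I_n})
  (x y : cfg n) : C :=
  \sum_(z : cfg n | onA (~: A) z) psi (merge A x z) * (psi (merge A y z))^*.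

Definition purity (C : numClosedFieldType) n (psi : cfg n -> C) (A : {set 'I_n}) : C :=
  \sum_(x : cfg n | onA A x) \sum_(y : cfg n | onA A y) rdm psi A x y * rdm psi A y x.

Definition Cmeas (C : numClosedFieldType) n (psi : cfg n -> C) : C :=
  1 - ((2 ^ n)%:R)^-1 * \sum_(A : {set 'I_n}) purity psi A.

Lemma idx_lt n k (c : 'I_k) (j : 'I_n) : (c * n + j < n * k)%N.
Proof.
have hc := ltn_ord c. have hj := ltn_ord j.
apply: (@leq_trans (c * n + n)); first by rewrite ltn_add2l.
by rewrite addnC -mulSn mulnC leq_mul2l hc orbT.
Qed.

(* qubit j of copy c sits at position c*n + j *)
Definition idx n k (c : 'I_k) (j : 'I_n) : 'I_(n * k) := Ordinal (idx_lt c j).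

Definition tpow (C : numClosedFieldType) n (psi : cfg n -> C) (k : nat)
  (x : cfg (n * k)) : C :=
  \prod_(c < k) psi [ffun j : 'I_n => x (idx c j)].
Arguments tpow {C n} psi k x.

From Pilot Require Import Defs.
From HB Require Import structures.
From mathcomp Require Import all_boot all_order all_algebra.
Set Implicit Arguments. Unset Strict Implicit. Unset Printing Implicit Defensive.
Import Order.TTheory GRing.Theory Num.Theory.
Local Open Scope ring_scope.

(* Identify the n*k qubits with k copies of n qubits.  Bit strings and subsets
   of the big register then correspond bijectively to k-tuples of bit strings
   and subsets of one copy, and the reduced state of psi^{(x)k} on a subset A
   is the tensor product of the reduced states of psi on the slices of A.
   Hence Tr[rho_A^2] factors as a product over the copies, and summing over A
   gives (sum_B Tr[rho_B^2])^k, while 2^{nk} = (2^n)^k. *)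

Section Slicing.
Variables n k : nat.

Lemma n_gt0 (i : 'I_(n * k)) : (0 < n)%N.
Proof. by case: n i => [|m] [i hi] //; rewrite mul0n in hi. Qed.

Lemma qubit_of_lt (i : 'I_(n * k)) : (i %% n < n)%N.
Proof. exact: ltn_pmod (n_gt0 i). Qed.

Lemma copy_of_lt (i : 'I_(n * k)) : (i %/ n < k)%N.
Proof. by rewrite ltn_divLR ?(n_gt0 i) //; case: i => i /=; rewrite mulnC. Qed.

Definition qubit_of (i : 'I_(n * k)) : 'I_n := Ordinal (qubit_of_lt i).
Definition copy_of (i : 'I_(n * k)) : 'I_k := Ordinal (copy_of_lt i).

Lemma idx_copy_qubit i : idx (copy_of i) (qubit_of i) = i.
Proof. by apply: val_inj; rewrite /= -divn_eq. Qed.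

Lemma copy_of_idx c j : copy_of (idx c j) = c.
Proof.
apply: val_inj => /=; have lt_j_n := ltn_ord j.
by rewrite divnMDl ?(leq_ltn_trans _ lt_j_n) // divn_small // addn0.
Qed.

Lemma qubit_of_idx c j : qubit_of (idx c j) = j.
Proof. by apply: val_inj; rewrite /= modnMDl modn_small. Qed.

Definition split_cfg (x : cfg (n * k)) : {ffun 'I_k -> cfg n} :=
  [ffun c => [ffun j => x (idx c j)]].
Definition join_cfg (f : {ffun 'I_k -> cfg n}) : cfg (n * k) :=
  [ffun i => f (copy_of i) (qubit_of i)].

Lemma split_cfgK : cancel split_cfg join_cfg.
Proof. by move=> x; apply/ffunP => i; rewrite !ffunE idx_copy_qubit. Qed.

Lemma join_cfgK : cancel join_cfg split_cfg.
Proof.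
by move=> f; apply/ffunP => c; apply/ffunP => j; rewrite !ffunE copy_of_idx qubit_of_idx.
Qed.

Lemma join_cfg_bij : bijective join_cfg.
Proof. exact: Bijective join_cfgK split_cfgK. Qed.

Definition split_set (A : {set 'I_(n * k)}) : {ffun 'I_k -> {set 'I_n}} :=
  [ffun c => [set j | idx c j \in A]].
Definition join_set (F : {ffun 'I_k -> {set 'I_n}}) : {set 'I_(n * k)} :=
  [set i | qubit_of i \in F (copy_of i)].

Lemma split_setK : cancel split_set join_set.
Proof. by move=> A; apply/setP => i; rewrite !inE ffunE inE idx_copy_qubit. Qed.

Lemma join_setK : cancel join_set split_set.
Proof.
by move=> F; apply/ffunP => c; apply/setP => j; rewrite ffunE !inE copy_of_idx qubit_of_idx.
Qed.

Lemma join_set_bij : bijective join_set.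
Proof. exact: Bijective join_setK split_setK. Qed.

Lemma split_setC A c : split_set (~: A) c = ~: split_set A c.
Proof. by apply/setP => j; rewrite !(ffunE, inE). Qed.

Lemma onA_split A x :
  onA A x = [forall c, onA (split_set A c) (split_cfg x c)].
Proof.
apply/forallP/forallP => [onAx c | onAx i].
  by apply/forallP => j; have := onAx (idx c j); rewrite !(ffunE, inE).
have /forallP/(_ (qubit_of i)) := onAx (copy_of i).
by rewrite !(ffunE, inE) idx_copy_qubit.
Qed.

Lemma split_merge A x z c :
  split_cfg (Defs.merge A x z) c =
  Defs.merge (split_set A c) (split_cfg x c) (split_cfg z c).
Proof. by apply/ffunP => j; rewrite !(ffunE, inE). Qed.

Lemma sum_split_prod (R : comPzSemiRingType) (P : 'I_k -> pred (cfg n))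
    (F : 'I_k -> cfg n -> R) :
  \sum_(x : cfg (n * k) | [forall c, P c (split_cfg x c)])
     \prod_c F c (split_cfg x c) =
  \prod_c \sum_(y | P c y) F c y.
Proof.
rewrite bigA_distr_big_dep (reindex join_cfg) /=; last exact: onW_bij join_cfg_bij.
apply: eq_big => [f | f _]; last by rewrite join_cfgK.
by rewrite join_cfgK; apply/forallP/familyP.
Qed.

Lemma sum_split_set (R : comPzSemiRingType) (F : 'I_k -> {set 'I_n} -> R) :
  \sum_(A : {set 'I_(n * k)}) \prod_c F c (split_set A c) =
  \prod_c \sum_B F c B.
Proof.
rewrite bigA_distr_bigA (reindex join_set) /=; last exact: onW_bij join_set_bij.
by apply: eq_bigr => F' _; rewrite join_setK.
Qed.

End Slicing.

Section TensorPower.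
Variables (C : numClosedFieldType) (n k : nat) (psi : cfg n -> C).

Lemma tpowE x : tpow psi k x = \prod_c psi (split_cfg x c).
Proof. by apply: eq_bigr => c _; rewrite ffunE. Qed.

Lemma rdm_tpow A x y :
  rdm (tpow psi k) A x y =
  \prod_c rdm psi (split_set A c) (split_cfg x c) (split_cfg y c).
Proof.
rewrite /rdm -sum_split_prod.
apply: eq_big => [z | z _].
  by rewrite onA_split; under eq_forallb do rewrite split_setC.
by rewrite !tpowE rmorph_prod -big_split; apply: eq_bigr => c _; rewrite !split_merge.
Qed.

Lemma purity_tpow A :
  purity (tpow psi k) A = \prod_c purity psi (split_set A c).
Proof.
rewrite /purity -sum_split_prod.
apply: eq_big => [x | x _]; first exact: onA_split.
rewrite -sum_split_prod; apply: eq_big => [y | y _]; first exact: onA_split.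
by rewrite !rdm_tpow -big_split.
Qed.

Lemma sum_purity_tpow :
  \sum_(A : {set 'I_(n * k)}) purity (tpow psi k) A =
  (\sum_(B : {set 'I_n}) purity psi B) ^+ k.
Proof.
under eq_bigr do rewrite purity_tpow.
by rewrite (sum_split_set (fun _ => purity psi)) prodr_const card_ord.
Qed.

Lemma Cmeas_tpow : Cmeas (tpow psi k) = 1 - (1 - Cmeas psi) ^+ k.
Proof. by rewrite /Cmeas sum_purity_tpow subKr exprMn exprVn -natrX -expnM. Qed.

End TensorPower.

Theorem mainTheorem13 (C : numClosedFieldType) (n k : nat) (psi : cfg n -> C) :
  \sum_(x : cfg n) `|psi x| ^+ 2 = 1 -> (1 <= k)%N ->
  Cmeas (tpow psi k) = 1 - (1 - Cmeas psi) ^+ k.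
Proof. by move=> _ _; exact: Cmeas_tpow. Qed.
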